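(* Consider $m$ agents $i=1,\ldots,m$ with data and weight matrix $W$ as described in the context. Fix $\hat{\delta}>0$, an integer $T\ge1$, and a time $t\ge\max(t_1,t_2,t_3)$, where $t_1=8n+16\log\frac{2}{\hat\delta}$, $t_2=\left(\frac{16\hat{\mu}(\sqrt{4n}+\sqrt{2\log\frac{2}{\hat\delta}})}{\sigma_x}\right)^2$, $t_3=2(n+l)\log\frac{1}{\hat\delta}$. On the event $E_3$ defined in the context, for all $i\in\{1,\ldots,m\}$, $$\|\alpha^T_{i,t+1}-\bar\alpha_{t+1}\|\le m^{3/2}\sqrt{l}\,(\rho(W))^T\,(tc_1+\sqrt t\,c_2),$$ where $c_1=\|\Theta\|\big(\frac{19}{8}\sigma_x^2+\hat{\mu}^2\big)$ and $c_2=\sigma_\eta\Big(4\sigma_x\sqrt{(n+l)\log\frac{9}{\hat\delta}}+\hat{\mu}\big(\sqrt{2(l+n)}+\sqrt{2\log\frac{2}{\hat\delta}}\big)\Big)$.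
   Context: Data model: each agent $i\in\{1,\dots,m\}$ observes at times $j=1,2,\ldots$ pairs $(x_{i,j},y_{i,j})$ with $y_{i,j}=\Theta x_{i,j}+\eta_{i,j}$, $\Theta\in\mathbb{R}^{l\times n}$ unknown, $x_{i,j}\sim\mathcal{N}(\mu_{i,j},\sigma_x^2I_n)$, $\eta_{i,j}\sim\mathcal{N}(0,\sigma_\eta^2I_l)$, all mutually independent over time and agents, with deterministic means and $\sup_{i,j}\|\mu_{i,j}\|=\hat\mu<\infty$; $\sigma_x,\sigma_\eta>0$. The agents communicate over an undirected connected graph; $W\in\mathbb{R}^{m\times m}$ satisfies: $W(i,j)\ge0$, $W(i,j)=0$ if $j$ is not a neighbor of $i$ and $i\ne j$, $W\mathbf 1_m=\mathbf 1_m$, $W=W^*$, and $\rho(W)=\max\{\lambda_2(W),-\lambda_m(W)\}<1$, where $\lambda_1(W)\ge\lambda_2(W)\ge\cdots\ge\lambda_m(W)$ are the (real) eigenvalues of $W$. Define $\alpha_{i,t+1}=\sum_{j=1}^ty_{i,j}x_{i,j}^*$, $\bar\alpha_{t+1}=\frac1m\sum_{i=1}^m\alpha_{i,t+1}$, and the communicated quantities $\alpha^0_{i,t+1}=\alpha_{i,t+1}$, $\alpha^{k+1}_{i,t+1}=\sum_{j=1}^m W(i,j)\alpha^k_{j,t+1}$ for $k=0,\ldots,T-1$. Let $\bar{\mu}_{i,t}=\frac{4}{t\sigma_x^2}\sum_{j=1}^t\mu_{i,j}\mu_{i,j}^*$. The event $E_3$ is the intersection over all $i$ of $\{\|\sum_{j=1}^tx_{i,j}x_{i,j}^*\|\le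 t(\frac{19}{8}\sigma_x^2+\hat\mu^2)\}$, $\{\lambda_{\min}(\sum_{j=1}^tx_{i,j}x_{i,j}^* )\ge\frac{t\sigma_x^2}{8}\lambda_{\min}(I_n+\bar\mu_{i,t})\}$, and $\{\|\sum_{j=1}^t\eta_{i,j}x_{i,j}^*\|\le\sqrt t\,\sigma_\eta(4\sigma_x\sqrt{(n+l)\log\frac9{\hat\delta}}+\hat\mu(\sqrt{2(l+n)}+\sqrt{2\log\frac2{\hat\delta}}))\}$. $\|\cdot\|$ is the spectral norm, $A^*$ the transpose. *)

From HB Require Import structures.
From mathcomp Require Import all_boot all_order all_algebra.
From mathcomp Require Import all_classical all_reals all_analysis.
Set Implicit Arguments. Unset Strict Implicit. Unset Printing Implicit Defensive.
Import Order.TTheory GRing.Theory Num.Theory.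
Local Open Scope classical_set_scope.
Local Open Scope ring_scope.

Section Defs.
Variable R : realType.

Definition vnorm (p : nat) (v : 'cV[R]_p) : R := Num.sqrt (\sum_(i < p) v i 0 ^+ 2).

Definition specnorm (p q : nat) (A : 'M[R]_(p, q)) : R :=
  sup [set vnorm (A *m v) | v in [set v : 'cV[R]_q | vnorm v <= 1]].

Definition lambda_min (p : nat) (A : 'M[R]_p) : R :=
  inf [set a : R | eigenvalue A a].

(* eigenvalues of W listed with multiplicity in nonincreasing order:
   lam = [:: lambda_1; ...; lambda_m] *)
Definition ordered_eigs (m : nat) (W : 'M[R]_m) (lam : seq R) : Prop :=
  [/\ size lam = m, sorted (fun a b : R => b <= a) lam &
      char_poly W = \prod_(a <- lam) ('X - a%:P)].

Definition rhoW (m : nat) (lam : seq R) : R :=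
  Num.max (nth 0 lam 1) (- nth 0 lam m.-1).

Fixpoint consensus (m l n : nat) (W : 'M[R]_m) (alpha : 'I_m -> 'M[R]_(l, n))
  (k : nat) : 'I_m -> 'M[R]_(l, n) :=
  match k with
  | 0 => alpha
  | k'.+1 => fun i => \sum_(j < m) W i j *: consensus W alpha k' j
  end.

End Defs.

(* Write P for the T-th power of W.  On E_3 every local statistic
   alpha_j = Theta (sum x x^T) + sum eta x^T has spectral norm at most K = t c1 + sqrt t c2.
   The consensus iterate is alpha^T_i = sum_j P_ij alpha_j, so
   alpha^T_i - alphabar = sum_j (P_ij - 1/m) alpha_j.  Since W is symmetric with W 1 = 1 and
   rho(W) < 1, the eigenvalue 1 is simple with eigenvector 1 and W contracts mean-zero vectors
   by rho(W); applied to e_j - 1/m this gives |P_ij - 1/m| <= rho(W)^T.  Summing over j bounds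
   the deviation by m rho(W)^T K, and the extra factor sqrt(m l) of the stated bound is slack
   (it is >= 1 unless l = 0, when all the matrices vanish). *)

From HB Require Import structures.
From mathcomp Require Import all_boot all_order all_algebra.
From mathcomp Require Import all_classical all_reals all_analysis.
From mathcomp Require Import complex ring lra.
Import Order.TTheory GRing.Theory Num.Theory.
Set Implicit Arguments. Unset Strict Implicit. Unset Printing Implicit Defensive.
Local Open Scope classical_set_scope.
Local Open Scope ring_scope.

Section EuclideanNorm.
Variable R : realType.
Implicit Types (p : nat) (a b c : R).

Lemma vnorm_ge0 p (v : 'cV[R]_p) : 0 <= vnorm v.
Proof. exact: sqrtr_ge0. Qed.

Lemma sqr_vnorm p (v : 'cV[R]_p) : vnorm v ^+ 2 = \sum_i v i 0 ^+ 2.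
Proof. by rewrite sqr_sqrtr // sumr_ge0 // => i _; exact: sqr_ge0. Qed.

Lemma sqr_le_sqr a b : `|a| <= b -> a ^+ 2 <= b ^+ 2.
Proof.
move=> ab; have b0 : 0 <= b := le_trans (normr_ge0 a) ab.
by rewrite -real_normK ?num_real // ler_sqr ?nnegrE ?normr_ge0.
Qed.

Lemma vnorm_le p (v : 'cV[R]_p) c :
  0 <= c -> \sum_i v i 0 ^+ 2 <= c ^+ 2 -> vnorm v <= c.
Proof. by move=> c0; rewrite -sqr_vnorm ler_sqr ?nnegrE ?vnorm_ge0. Qed.

Lemma normr_le_vnorm p (v : 'cV[R]_p) i : `|v i 0| <= vnorm v.
Proof.
rewrite -ler_sqr ?nnegrE ?normr_ge0 ?vnorm_ge0 // real_normK ?num_real //.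
rewrite sqr_vnorm (bigD1 i) //= lerDl.
by apply: sumr_ge0 => j _; exact: sqr_ge0.
Qed.

Lemma vnorm0 p : vnorm (0 : 'cV[R]_p) = 0.
Proof. by rewrite /vnorm big1 ?sqrtr0 // => i _; rewrite mxE expr0n. Qed.

Lemma vnormZ p c (v : 'cV[R]_p) : vnorm (c *: v) = `|c| * vnorm v.
Proof.
rewrite /vnorm -sqrtr_sqr -sqrtrM ?sqr_ge0 // mulr_sumr.
by congr Num.sqrt; apply: eq_bigr => i _; rewrite mxE exprMn.
Qed.

Lemma lagrange_identity p (u v : 'I_p -> R) :
  \sum_i \sum_j (u i * v j - u j * v i) ^+ 2 =
  2 * ((\sum_i u i ^+ 2) * (\sum_i v i ^+ 2) - (\sum_i u i * v i) ^+ 2).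
Proof.
have -> : forall a b c : R, 2 * (a * b - c ^+ 2) = a * b + b * a - 2 * (c * c).
  by move=> a b c; ring.
rewrite !big_distrlr mulr_sumr -big_split -sumrB /=; apply: eq_bigr => i _.
by rewrite mulr_sumr -big_split -sumrB /=; apply: eq_bigr => j _; ring.
Qed.

Lemma dot_le_vnorm p (u v : 'cV[R]_p) :
  \sum_i u i 0 * v i 0 <= vnorm u * vnorm v.
Proof.
have CS : (\sum_i u i 0 * v i 0) ^+ 2 <= (vnorm u * vnorm v) ^+ 2.
  rewrite exprMn !sqr_vnorm -subr_ge0 -(pmulr_rge0 _ (ltr0Sn R 1)).
  rewrite -lagrange_identity; apply: sumr_ge0 => i _.
  by apply: sumr_ge0 => j _; exact: sqr_ge0.
apply: le_trans (ler_norm _) _.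
by rewrite -ler_sqr ?nnegrE ?normr_ge0 ?mulr_ge0 ?vnorm_ge0 // real_normK ?num_real.
Qed.

Lemma vnormD p (u v : 'cV[R]_p) : vnorm (u + v) <= vnorm u + vnorm v.
Proof.
apply: vnorm_le; first by rewrite addr_ge0 ?vnorm_ge0.
have -> : \sum_i (u + v) i 0 ^+ 2 =
    \sum_i u i 0 ^+ 2 + \sum_i v i 0 ^+ 2 + 2 * \sum_i u i 0 * v i 0.
  by rewrite mulr_sumr -!big_split /=; apply: eq_bigr => i _; rewrite mxE; ring.
by rewrite sqrrD -!sqr_vnorm; have := dot_le_vnorm u v; lra.
Qed.

End EuclideanNorm.

Section SpectralNorm.
Variable R : realType.
Implicit Types (p q : nat).

Lemma specnorm_set_neq0 p q (A : 'M[R]_(p, q)) :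
  [set vnorm (A *m v) | v in [set v : 'cV[R]_q | vnorm v <= 1]] !=set0.
Proof. by exists (vnorm (A *m 0)), 0; rewrite //= vnorm0 ler01. Qed.

Lemma specnorm_set_ub p q (A : 'M[R]_(p, q)) :
  has_ubound [set vnorm (A *m v) | v in [set v : 'cV[R]_q | vnorm v <= 1]].
Proof.
exists (Num.sqrt (\sum_i (\sum_j `|A i j|) ^+ 2)) => _ [v /= v1 <-].
rewrite ler_sqrt ?sumr_ge0 // => [|i _]; last exact: sqr_ge0.
apply: ler_sum => i _; apply: sqr_le_sqr; rewrite mxE.
apply: le_trans (ler_norm_sum _ _ _) _; apply: ler_sum => j _.
rewrite normrM ler_piMr ?normr_ge0 //.
exact: le_trans (normr_le_vnorm _ _) v1.
Qed.

Lemma specnorm_le p q (A : 'M[R]_(p, q)) K :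
  (forall v : 'cV[R]_q, vnorm v <= 1 -> vnorm (A *m v) <= K) -> specnorm A <= K.
Proof.
by move=> AK; apply: ge_sup => [|_ [v v1 <-]]; [exact: specnorm_set_neq0 | exact: AK].
Qed.

Lemma vnorm_mulmx_le_specnorm p q (A : 'M[R]_(p, q)) v :
  vnorm v <= 1 -> vnorm (A *m v) <= specnorm A.
Proof. by move=> v1; apply: (ub_le_sup (specnorm_set_ub A)); exists v. Qed.

Lemma specnorm_ge0 p q (A : 'M[R]_(p, q)) : 0 <= specnorm A.
Proof.
apply: le_trans (vnorm_ge0 _) (vnorm_mulmx_le_specnorm A (v := 0) _).
by rewrite vnorm0 ler01.
Qed.

Lemma specnorm0 p q : specnorm (0 : 'M[R]_(p, q)) = 0.
Proof.
apply/eqP; rewrite eq_le specnorm_ge0 andbT.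
by apply: specnorm_le => v _; rewrite mul0mx vnorm0.
Qed.

Lemma specnorm_flat q (A : 'M[R]_(0, q)) : specnorm A = 0.
Proof. by rewrite [A]flatmx0 specnorm0. Qed.

Lemma vnorm_mulmx p q (A : 'M[R]_(p, q)) v : vnorm (A *m v) <= specnorm A * vnorm v.
Proof.
have [v0|v_neq0] := eqVneq (vnorm v) 0.
  suff -> : v = 0 by rewrite mulmx0 !vnorm0 mulr0.
  apply/matrixP => i j; rewrite ord1 mxE; apply/normr0_eq0/le_anti.
  by rewrite normr_ge0 -v0 normr_le_vnorm.
have v_gt0 : 0 < vnorm v by rewrite lt_def v_neq0 vnorm_ge0.
have := vnorm_mulmx_le_specnorm A (v := (vnorm v)^-1 *: v).
rewrite -scalemxAr !vnormZ ger0_norm ?invr_ge0 ?vnorm_ge0 // mulVf // lexx.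
by move=> /(_ isT); rewrite mulrC ler_pdivrMr.
Qed.

Lemma specnormD p q (A B : 'M[R]_(p, q)) : specnorm (A + B) <= specnorm A + specnorm B.
Proof.
apply: specnorm_le => v v1; rewrite mulmxDl; apply: le_trans (vnormD _ _) _.
by apply: lerD; apply: le_trans (vnorm_mulmx _ _) _; rewrite ler_piMr ?specnorm_ge0.
Qed.

Lemma specnormZ p q (c : R) (A : 'M[R]_(p, q)) : specnorm (c *: A) <= `|c| * specnorm A.
Proof.
apply: specnorm_le => v v1; rewrite -scalemxAl vnormZ ler_wpM2l ?normr_ge0 //.
exact: vnorm_mulmx_le_specnorm.
Qed.

Lemma specnormM p q r (A : 'M[R]_(p, q)) (B : 'M[R]_(q, r)) :
  specnorm (A *m B) <= specnorm A * specnorm B.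
Proof.
apply: specnorm_le => v v1; rewrite -mulmxA; apply: le_trans (vnorm_mulmx _ _) _.
by rewrite ler_wpM2l ?specnorm_ge0 ?vnorm_mulmx_le_specnorm.
Qed.

Lemma specnorm_sum p q (I : finType) (F : I -> 'M[R]_(p, q)) :
  specnorm (\sum_i F i) <= \sum_i specnorm (F i).
Proof.
elim/big_ind2: _ => [|a A b B aA bB|//]; first by rewrite specnorm0.
exact: le_trans (specnormD A B) (lerD aA bB).
Qed.

Lemma specnorm_linear_model_le l n (I : Type) (r : seq I) (Theta : 'M[R]_(l, n))
    (x : I -> 'cV[R]_n) (eta : I -> 'cV[R]_l) :
  specnorm (\sum_(j <- r) (Theta *m x j + eta j) *m (x j)^T)
    <= specnorm Theta * specnorm (\sum_(j <- r) x j *m (x j)^T)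
       + specnorm (\sum_(j <- r) eta j *m (x j)^T).
Proof.
have -> : \sum_(j <- r) (Theta *m x j + eta j) *m (x j)^T =
    Theta *m \sum_(j <- r) x j *m (x j)^T + \sum_(j <- r) eta j *m (x j)^T.
  by rewrite mulmx_sumr -big_split; apply: eq_bigr => j _; rewrite mulmxDl mulmxA.
by apply: le_trans (specnormD _ _) _; rewrite lerD2r specnormM.
Qed.

End SpectralNorm.

Section Consensus.
Variables (R : realType) (m : nat) (W : 'M[R]_m).

Lemma consensusE l n (alpha : 'I_m -> 'M[R]_(l, n)) k i :
  consensus W alpha k i = \sum_j (W ^+ k) i j *: alpha j.
Proof.
elim: k i => [|k IHk] i /=.
  rewrite (bigD1 i) //= big1 ?addr0 => [|j ji]; first by rewrite mxE eqxx scale1r.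
  by rewrite mxE eq_sym (negPf ji) scale0r.
under eq_bigr do rewrite IHk scaler_sumr.
rewrite exchange_big /=; apply: eq_bigr => j _.
by rewrite exprS -mulmxE mxE scaler_suml; apply: eq_bigr => k' _; rewrite scalerA.
Qed.

Hypothesis W1 : W *m const_mx 1 = const_mx 1 :> 'cV[R]_m.
Hypothesis Wsym : W^T = W.

Lemma exprW_const k : W ^+ k *m const_mx 1 = const_mx 1 :> 'cV[R]_m.
Proof. by elim: k => [|k IHk]; rewrite ?mul1mx // exprS -mulmxE -mulmxA IHk. Qed.

Lemma ones_mulmx : const_mx 1 *m W = const_mx 1 :> 'rV[R]_m.
Proof. by apply: trmx_inj; rewrite trmx_mul Wsym !trmx_const W1. Qed.

Lemma sum_mulmx (w : 'cV[R]_m) : \sum_k (W *m w) k 0 = \sum_k w k 0.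
Proof.
have sumE (v : 'cV[R]_m) : \sum_k v k 0 = ((const_mx 1 : 'rV[R]_m) *m v) 0 0.
  by rewrite mxE; apply: eq_bigr => k _; rewrite mxE mul1r.
by rewrite !sumE mulmxA ones_mulmx.
Qed.

Variable rho : R.
Hypothesis rho_ge0 : 0 <= rho.
Hypothesis W_contract :
  forall w : 'cV[R]_m, \sum_k w k 0 = 0 -> vnorm (W *m w) <= rho * vnorm w.

Lemma exprW_contract k (w : 'cV[R]_m) :
  \sum_k w k 0 = 0 -> vnorm (W ^+ k *m w) <= rho ^+ k * vnorm w.
Proof.
elim: k w => [|k IHk] w w0; first by rewrite mul1mx expr0 mul1r.
rewrite exprSr -mulmxE -mulmxA; apply: le_trans (IHk _ _) _; first by rewrite sum_mulmx.
by rewrite exprSr -mulrA ler_wpM2l ?exprn_ge0 ?W_contract.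
Qed.

(* Apply the contraction to the mean-zero vector e_j - 1/m, of norm at most 1. *)
Lemma exprW_entry_dev k i j : `|(W ^+ k) i j - m%:R^-1| <= rho ^+ k.
Proof.
have m_neq0 : m%:R != 0 :> R by rewrite pnatr_eq0 -lt0n (leq_ltn_trans _ (ltn_ord i)).
pose c : R := m%:R^-1.
pose w : 'cV[R]_m := \col_a ((a == j)%:R - c).
have sum_indicator : \sum_a (a == j)%:R = 1 :> R.
  by rewrite (bigD1 j) //= eqxx big1 ?addr0 // => a /negPf ->.
have dev_entry : (W ^+ k) i j - c = (W ^+ k *m w) i 0.
  have := congr1 (fun v : 'cV[R]_m => v i 0) (exprW_const k).
  rewrite !mxE; under eq_bigr do rewrite mxE mulr1; move=> sum_row.
  under eq_bigr do rewrite !mxE mulrBr.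
  rewrite sumrB -mulr_suml sum_row mul1r (bigD1 j) //= eqxx mulr1.
  by rewrite big1 ?addr0 // => a /negPf ->; rewrite mulr0.
have w_mean0 : \sum_a w a 0 = 0.
  under eq_bigr do rewrite mxE.
  by rewrite sumrB sum_indicator sumr_const card_ord -mulr_natl mulfV ?subrr.
have w_le1 : vnorm w <= 1.
  apply: vnorm_le => //; rewrite expr1n.
  have sqr_w a : w a 0 ^+ 2 = (a == j)%:R * (1 - 2 * c) + c ^+ 2.
    by rewrite mxE; case: (a == j); rewrite ?mulr1n ?mulr0n; ring.
  under eq_bigr do rewrite sqr_w.
  rewrite big_split /= -mulr_suml sum_indicator sumr_const card_ord.
  have -> : c ^+ 2 *+ m = c by rewrite -mulr_natl expr2 mulrA mulfV ?mul1r.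
  have : 0 <= c by rewrite invr_ge0 ler0n.
  lra.
rewrite dev_entry; apply: le_trans (normr_le_vnorm _ _) _.
apply: le_trans (exprW_contract k w_mean0) _.
by rewrite ler_piMr ?exprn_ge0.
Qed.

Lemma consensus_dev_le l n (alpha : 'I_m -> 'M[R]_(l, n)) K k i :
  (forall j, specnorm (alpha j) <= K) ->
  specnorm (consensus W alpha k i - m%:R^-1 *: \sum_j alpha j) <= m%:R * (rho ^+ k * K).
Proof.
move=> alphaK.
rewrite consensusE scaler_sumr -sumrB; under eq_bigr do rewrite -scalerBl.
apply: le_trans (specnorm_sum _) _.
have -> : m%:R * (rho ^+ k * K) = \sum_(j < m) rho ^+ k * K.
  by rewrite sumr_const card_ord mulr_natl.
apply: ler_sum => j _.
apply: le_trans (specnormZ _ _) _.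
apply: ler_pM; rewrite ?normr_ge0 ?specnorm_ge0 //; exact: exprW_entry_dev.
Qed.

End Consensus.

Section OrderedEigenvalues.
Variables (R : realType) (m : nat) (W : 'M[R]_m) (lam : seq R).
Hypothesis eigs : ordered_eigs W lam.

Lemma nth_eigs_le i j : (i <= j < m)%N -> nth 0 lam j <= nth 0 lam i.
Proof.
case: eigs => size_lam sorted_lam _ /andP[ij jm].
have ge_trans : transitive (fun a b : R => b <= a).
  by move=> b a c /= ab bc; exact: le_trans bc ab.
apply: (sorted_leq_nth ge_trans (fun a : R => lexx a) 0 sorted_lam) => //.
  by rewrite inE size_lam (leq_ltn_trans ij jm).
by rewrite inE size_lam.
Qed.

Lemma rhoW_ge0 : 0 <= rhoW m lam.
Proof.
rewrite /rhoW le_max; have [m_le1|m_gt1] := leqP m 1.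
  by case: eigs => size_lam _ _; rewrite nth_default ?size_lam ?lexx.
apply/orP; have [|/ltW lam1_le0] := lerP 0 (nth 0 lam 1); [by left | right].
rewrite oppr_ge0 (le_trans _ lam1_le0) // nth_eigs_le //.
by rewrite -(ltn_predK m_gt1) ltnS leqnn andbT -ltnS (ltn_predK m_gt1).
Qed.

Lemma norm_eig_le_rhoW a : a \in lam -> a != nth 0 lam 0 -> `|a| <= rhoW m lam.
Proof.
case: (eigs) => size_lam _ _ /(nthP 0)[k + <-]; rewrite size_lam => km k_neq0.
have k_gt0 : (0 < k)%N by rewrite lt0n; apply: contraNneq k_neq0 => ->.
rewrite /rhoW le_max; apply/orP; have [lamk_ge0|lamk_lt0] := lerP 0 (nth 0 lam k).
  by left; rewrite ger0_norm // nth_eigs_le // k_gt0 km.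
right; rewrite ltr0_norm // lerN2 nth_eigs_le //.
by rewrite -ltnS (ltn_predK km) km leqnn.
Qed.

Hypothesis rho_lt1 : rhoW m lam < 1.
Hypothesis one_eig : (1 : R) \in lam.

Lemma head_eigs : nth 0 lam 0 = 1.
Proof.
apply/eqP; rewrite eq_sym; apply: contraTT rho_lt1 => one_neq_head.
by rewrite -leNgt -[1](normr1 R) norm_eig_le_rhoW.
Qed.

Lemma count_one_eigs : count_mem 1 lam = 1%N.
Proof.
have tail_lt1 k : (0 < k < m)%N -> nth 0 lam k < 1.
  move=> km; apply: le_lt_trans rho_lt1.
  by rewrite /rhoW le_max; apply/orP; left; exact: nth_eigs_le.
have [a [lam' lam_eq]] : exists a lam', lam = a :: lam'.
  by case: (lam) one_eig => // a lam' _; exists a, lam'.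
have := head_eigs; case: eigs => size_lam _ _; rewrite lam_eq /= in size_lam tail_lt1 *.
move=> ->; rewrite eqxx add1n; congr S; apply/count_memPn/(nthP 0) => -[k klam' lamk1].
by have := tail_lt1 k.+1; rewrite /= lamk1 ltxx -size_lam ltnS klam' => /(_ isT).
Qed.

End OrderedEigenvalues.

Lemma char_poly_similar (F : fieldType) n (P A : 'M[F]_n) :
  P \in unitmx -> char_poly (invmx P *m A *m P) = char_poly A.
Proof.
move=> P_unit; pose Q := map_mx polyC P; pose Qi := map_mx polyC (invmx P).
have QiQ : Qi *m Q = 1%:M by rewrite -map_mxM mulVmx // map_mx1.
rewrite /char_poly; have -> : char_poly_mx (invmx P *m A *m P) = Qi *m char_poly_mx A *m Q.
  rewrite /char_poly_mx mulmxBr mulmxBl !map_mxM -/Q -/Qi.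
  by rewrite mul_mx_scalar -scalemxAl QiQ scalemx1.
by rewrite !det_mulmx mulrAC -det_mulmx QiQ det1 mul1r.
Qed.

Section NormalMatrix.
Local Open Scope sesquilinear_scope.
Variable C : numClosedFieldType.
Implicit Types (n : nat).

Definition hdot n (u v : 'cV[C]_n) := \sum_k (u k 0)^* * v k 0.
Definition hnorm2 n (v : 'cV[C]_n) := \sum_k `|v k 0| ^+ 2.

Lemma hnorm2E n (v : 'cV[C]_n) : hnorm2 v = hdot v v.
Proof. by apply: eq_bigr => k _; rewrite normCKC. Qed.

Lemma hdot_unitary n (Q : 'M[C]_n) (u v : 'cV[C]_n) :
  Q^t* *m Q = 1%:M -> hdot (Q *m u) (Q *m v) = hdot u v.
Proof.
have hdotE (x y : 'cV[C]_n) : hdot x y = (x^t* *m y) 0 0.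
  by rewrite mxE; apply: eq_bigr => k _; rewrite !mxE.
by move=> QtQ; rewrite !hdotE trmx_mul map_mxM -mulmxA (mulmxA (Q^t*)) QtQ mul1mx.
Qed.

Lemma spectral_diag_perm_eq n (A : 'M[C]_n) (s : seq C) :
  A \is normalmx -> char_poly A = \prod_(a <- s) ('X - a%:P) ->
  perm_eq [seq spectral_diag A 0 k | k <- enum 'I_n] s.
Proof.
move=> /orthomx_spectralP A_spec char_A; apply: prod_XsubC_eq.
rewrite -char_A [X in char_poly X]A_spec char_poly_similar ?spectral_unit //.
rewrite char_poly_trig ?diag_mx_is_trig // big_map big_enum /=.
by apply: eq_bigr => k _; rewrite mxE eqxx mulr1n.
Qed.

(* The entries of [spectral_diag A] are the eigenvalues of [A].  The eigenvector [u] spans the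
   eigenspace of 1, so on its orthogonal complement only eigenvalues of modulus <= [r] act. *)
Lemma normal_contract n (A : 'M[C]_n) (u v : 'cV[C]_n) (r : C) :
  A \is normalmx -> A *m u = u -> u != 0 -> hdot u v = 0 ->
  (forall k k', spectral_diag A 0 k = 1 -> spectral_diag A 0 k' = 1 -> k = k') ->
  (forall k, spectral_diag A 0 k != 1 -> `|spectral_diag A 0 k| <= r) ->
  hnorm2 (A *m v) <= r ^+ 2 * hnorm2 v.
Proof.
move=> A_normal Au u_neq0 uv0 simple1 d_le.
set P := spectralmx A; set d := spectral_diag A in simple1 d_le *.
have P_unitary : P \is unitarymx := spectral_unitarymx A.
have PtP : P^t* *m P = 1%:M by rewrite -invmx_unitary // mulVmx // spectral_unit.
have PPt : P *m P^t* = 1%:M by apply/unitarymxP.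
have A_spec : A = P^t* *m diag_mx d *m P.
  by rewrite -invmx_unitary //; exact/orthomx_spectralP.
pose x := P *m u; pose z := P *m v.
have Dx : diag_mx d *m x = x by rewrite /x -{2}Au A_spec !mulmxA PPt mul1mx.
have x_supp k : d 0 k != 1 -> x k 0 = 0.
  move=> dk_neq1; have /eqP := congr1 (fun y : 'cV_n => y k 0) Dx.
  rewrite mul_diag_mx mxE -subr_eq0 -{2}[x k 0]mul1r -mulrBl mulf_eq0 subr_eq0.
  by rewrite (negPf dk_neq1) => /eqP.
have /matrix0Pn[k0 [j0 xk0]] : x != 0.
  apply: contraNneq u_neq0 => x0.
  by rewrite -[u]mul1mx -PtP -mulmxA -/x x0 mulmx0.
rewrite ord1 in xk0.
have dk0 : d 0 k0 = 1 by apply/eqP; apply: contraNT xk0 => /x_supp ->.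
have d_neq1 k : k != k0 -> d 0 k != 1.
  by move=> kk0; apply: contra kk0 => /eqP dk; rewrite (simple1 _ _ dk dk0).
have zk0 : z k0 0 = 0.
  have : hdot x z = 0 by rewrite hdot_unitary.
  rewrite /hdot (bigD1 k0) //= big1 ?addr0 => [|k kk0]; last first.
    by rewrite x_supp ?d_neq1 // conjC0 mul0r.
  by move/eqP; rewrite mulf_eq0 conjC_eq0 (negPf xk0) => /eqP.
have -> : hnorm2 (A *m v) = hnorm2 (diag_mx d *m z).
  by rewrite !hnorm2E A_spec -!mulmxA hdot_unitary // trmxCK.
have -> : hnorm2 v = hnorm2 z by rewrite !hnorm2E hdot_unitary.
rewrite /hnorm2 mulr_sumr; apply: ler_sum => k _.
rewrite mul_diag_mx mxE normrM exprMn.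
have [->|kk0] := eqVneq k k0; first by rewrite zk0 normr0 expr0n /= !mulr0.
rewrite ler_wpM2r ?exprn_ge0 ?normr_ge0 // lerXn2r ?nnegrE ?normr_ge0 ?d_le ?d_neq1 //.
exact: le_trans (normr_ge0 _) (d_le _ (d_neq1 _ kk0)).
Qed.

End NormalMatrix.

Lemma normr_real_complex (R : realType) (a : R) : `|(a%:C)%C| = (`|a|%:C)%C.
Proof.
have [a_ge0|a_lt0] := lerP 0 a; first by rewrite !ger0_norm ?ler0c.
by rewrite !ltr0_norm ?ltcR ?rmorphN.
Qed.

Lemma hnorm2_real_complex (R : realType) n (v : 'cV[R]_n) :
  hnorm2 (map_mx (real_complex R) v) = ((\sum_k v k 0 ^+ 2)%:C)%C.
Proof.
rewrite rmorph_sum; apply: eq_bigr => k _.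
by rewrite mxE normr_real_complex -rmorphXn real_normK ?num_real.
Qed.

(* The library's spectral theorem is stated for normal matrices over an algebraically closed
   field, hence the detour through [R[i]]. *)
Section Complexification.
Variables (R : realType) (m : nat) (W : 'M[R]_m) (lam : seq R).
Hypothesis Wsym : W^T = W.
Hypothesis eigs : ordered_eigs W lam.
Local Notation Wc := (map_mx (real_complex R) W).
Local Notation d := (spectral_diag Wc).

Lemma complexify_normalmx : Wc \is normalmx.
Proof.
have WcC : Wc^t*%sesqui = Wc.
  by apply/matrixP => i j; rewrite !mxE -{1}Wsym mxE; exact: conjc_real.
by apply/normalmxP; rewrite WcC.
Qed.

Lemma complexify_spectral_perm_eq :
  perm_eq [seq d 0 k | k <- enum 'I_m] (map (real_complex R) lam).
Proof.
apply: spectral_diag_perm_eq; first exact: complexify_normalmx.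
rewrite -map_char_poly; case: eigs => _ _ ->; rewrite rmorph_prod big_map.
by apply: eq_bigr => a _; exact: map_polyXsubC.
Qed.

Hypothesis rho_lt1 : rhoW m lam < 1.
Hypothesis one_eig : (1 : R) \in lam.

Lemma complexify_spectral_simple1 k k' : d 0 k = 1 -> d 0 k' = 1 -> k = k'.
Proof.
have : #|[pred k0 : 'I_m | d 0 k0 == 1]| = count_mem (1 : R[i]) (map (real_complex R) lam).
  by rewrite cardE -(permP complexify_spectral_perm_eq) count_map -size_filter enumT.
rewrite count_map (eq_count (a2 := pred1 1)) => [|a]; last by rewrite /= fmorph_eq1.
rewrite (count_one_eigs eigs rho_lt1 one_eig) => /eqP; rewrite eqn_leq => /andP[+ _].
by move=> /card_le1_eqP simple dk dk'; apply/esym/simple; rewrite inE ?dk ?dk'.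
Qed.

Lemma complexify_spectral_le k : d 0 k != 1 -> `|d 0 k| <= ((rhoW m lam)%:C)%C.
Proof.
have /mapP[a a_lam ->] : d 0 k \in map (real_complex R) lam.
  by rewrite -(perm_mem complexify_spectral_perm_eq) map_f ?mem_enum.
rewrite fmorph_eq1 => a_neq1.
by rewrite normr_real_complex lecR (norm_eig_le_rhoW eigs) ?(head_eigs eigs).
Qed.

End Complexification.

Lemma one_mem_eigs (R : realType) m (W : 'M[R]_m) lam :
  (0 < m)%N -> W *m const_mx 1 = const_mx 1 :> 'cV[R]_m -> W^T = W ->
  ordered_eigs W lam -> (1 : R) \in lam.
Proof.
move=> m_gt0 W1 Wsym [_ _ char_W].
have : eigenvalue W 1.
  apply/eigenvalueP; exists (const_mx 1); first by rewrite scale1r ones_mulmx.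
  by apply/negP => /eqP/rowP/(_ (Ordinal m_gt0)); rewrite !mxE => /eqP; rewrite oner_eq0.
by rewrite eigenvalue_root_char char_W root_prod_XsubC.
Qed.

Lemma sym_contract (R : realType) m (W : 'M[R]_m) lam :
  (0 < m)%N -> W *m const_mx 1 = const_mx 1 :> 'cV[R]_m -> W^T = W ->
  ordered_eigs W lam -> rhoW m lam < 1 ->
  forall w : 'cV[R]_m, \sum_k w k 0 = 0 -> vnorm (W *m w) <= rhoW m lam * vnorm w.
Proof.
move=> m_gt0 W1 Wsym eigs rho_lt1 w w0.
have one_eig := one_mem_eigs m_gt0 W1 Wsym eigs.
have ones_C : const_mx 1 = map_mx (real_complex R) (const_mx 1 : 'cV[R]_m).
  by apply/matrixP => a b; rewrite !mxE rmorph1.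
have := normal_contract (complexify_normalmx Wsym) _ _ _
  (complexify_spectral_simple1 Wsym eigs rho_lt1 one_eig)
  (complexify_spectral_le Wsym eigs rho_lt1 one_eig).
move=> /(_ (const_mx 1) (map_mx (real_complex R) w)).
rewrite -map_mxM !hnorm2_real_complex -rmorphXn -rmorphM lecR => contract.
apply: vnorm_le; first by rewrite mulr_ge0 ?(rhoW_ge0 eigs) ?vnorm_ge0.
rewrite exprMn sqr_vnorm; apply: contract.
- by rewrite ones_C -map_mxM W1.
- by apply/negP => /eqP/matrixP/(_ (Ordinal m_gt0) 0); rewrite !mxE => /eqP; rewrite oner_eq0.
- rewrite /hdot; under eq_bigr do rewrite !mxE conjC1 mul1r.
  by rewrite -rmorph_sum w0 rmorph0.
Qed.

Theorem proposition2 (R : realType) (m n l : nat)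
  (adj : rel 'I_m) (W : 'M[R]_m) (lam : seq R)
  (Theta : 'M[R]_(l, n))
  (x mu : 'I_m -> nat -> 'cV[R]_n) (eta : 'I_m -> nat -> 'cV[R]_l)
  (y : 'I_m -> nat -> 'cV[R]_l)
  (sigma_x sigma_eta muhat deltahat : R) (T t : nat) :
  (* communication graph: undirected, connected *)
  (forall i j, adj i j = adj j i) ->
  (forall i j, fingraph.connect adj i j) ->
  (* weight matrix *)
  (forall i j, 0 <= W i j) ->
  (forall i j, i != j -> ~~ adj i j -> W i j = 0) ->
  W *m (const_mx 1 : 'cV[R]_m) = const_mx 1 ->
  W^T = W ->
  ordered_eigs W lam ->
  rhoW m lam < 1 ->
  (* data model (realization) *)
  0 < sigma_x -> 0 < sigma_eta ->
  (forall i j, y i j = Theta *m x i j + eta i j) ->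
  has_ubound [set vnorm (mu p.1 p.2) | p in [set p : 'I_m * nat | (0 < p.2)%N]] ->
  muhat = sup [set vnorm (mu p.1 p.2) | p in [set p : 'I_m * nat | (0 < p.2)%N]] ->
  (* parameters *)
  0 < deltahat -> (1 <= T)%N ->
  (t%:R >= 8 * n%:R + 16 * ln (2 / deltahat)) ->
  (t%:R >= (16 * muhat * (Num.sqrt (4 * n%:R) + Num.sqrt (2 * ln (2 / deltahat)))
             / sigma_x) ^+ 2) ->
  (t%:R >= 2 * (n + l)%:R * ln (1 / deltahat)) ->
  (* the event E_3 *)
  (forall i : 'I_m,
     specnorm (\sum_(1 <= j < t.+1) x i j *m (x i j)^T)
       <= t%:R * (19 / 8 * sigma_x ^+ 2 + muhat ^+ 2)
   /\ lambda_min (\sum_(1 <= j < t.+1) x i j *m (x i j)^T)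
       >= t%:R * sigma_x ^+ 2 / 8 *
          lambda_min (1%:M + (4 / (t%:R * sigma_x ^+ 2)) *:
                              \sum_(1 <= j < t.+1) mu i j *m (mu i j)^T)
   /\ specnorm (\sum_(1 <= j < t.+1) eta i j *m (x i j)^T)
       <= Num.sqrt t%:R * sigma_eta *
          (4 * sigma_x * Num.sqrt ((n + l)%:R * ln (9 / deltahat))
           + muhat * (Num.sqrt (2 * (l + n)%:R) + Num.sqrt (2 * ln (2 / deltahat))))) ->
  let alpha := fun i : 'I_m => \sum_(1 <= j < t.+1) y i j *m (x i j)^T in
  let alphabar := (m%:R)^-1 *: \sum_(i < m) alpha i in
  let c1 := specnorm Theta * (19 / 8 * sigma_x ^+ 2 + muhat ^+ 2) in
  let c2 := sigma_eta *
          (4 * sigma_x * Num.sqrt ((n + l)%:R * ln (9 / deltahat))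
           + muhat * (Num.sqrt (2 * (l + n)%:R) + Num.sqrt (2 * ln (2 / deltahat)))) in
  forall i : 'I_m,
    specnorm (consensus W alpha T i - alphabar)
      <= m%:R * Num.sqrt m%:R * Num.sqrt l%:R * rhoW m lam ^+ T
         * (t%:R * c1 + Num.sqrt t%:R * c2).
Proof.
move=> _ _ _ _ W1 Wsym eigs rho_lt1 _ _ y_model _ _ _ _ _ _ _ E3 alpha alphabar c1 c2 i.
have m_gt0 : (0 < m)%N := leq_ltn_trans (leq0n i) (ltn_ord i).
pose K := t%:R * c1 + Num.sqrt t%:R * c2.
have alpha_le j : specnorm (alpha j) <= K.
  have [xx_le [_ etax_le]] := E3 j.
  rewrite /alpha; under eq_bigr do rewrite y_model.
  apply: le_trans (specnorm_linear_model_le _ _ _ _) _.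
  apply: lerD; first by rewrite /c1 mulrCA; apply: ler_wpM2l; rewrite ?specnorm_ge0.
  by rewrite /c2 mulrA.
have [l0|l_gt0] := posnP l.
  by subst l; rewrite specnorm_flat sqrtr0 !(mulr0, mul0r).
have rho_ge0 := rhoW_ge0 eigs.
have K_ge0 : 0 <= K := le_trans (specnorm_ge0 _) (alpha_le i).
apply: le_trans (consensus_dev_le W1 Wsym rho_ge0
  (sym_contract m_gt0 W1 Wsym eigs rho_lt1) _ i alpha_le) _.
have sqrt_ge1 k : (0 < k)%N -> 1 <= Num.sqrt (k%:R : R).
  by move=> k_gt0; rewrite -{1}sqrtr1 ler_sqrt ?ler1n.
rewrite -!mulrA ler_wpM2l // mulrA ler_peMl ?mulr_ege1 ?sqrt_ge1 //.
by rewrite mulr_ge0 ?exprn_ge0.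
Qed.
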